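(* Let $\mathcal{V}$ be a multivector field on a Lefschetz complex $X$ and let $\varphi:\mathbb{Z}\to X$ be an essential solution of $\mathcal{V}$. Then both limit sets $\alpha(\varphi)$ and $\omega(\varphi)$ are nonempty isolated invariant sets.
   Context: A Lefschetz complex over a field $F$ is a pair $(X,\kappa)$ with $X$ a finite graded set $X=\bigsqcup_{k\ge0}X_k$ and $\kappa:X\times X\to F$ such that $\kappa(x,y)\ne0$ implies $x\in X_k,y\in X_{k-1}$ for some $k$, and $\sum_z\kappa(x,z)\kappa(z,y)=0$. The face relation $\le$ is the partial order generated by $y\le x$ whenever $\kappa(x,y)\ne0$. $\mathrm{cl}\,C$ denotes the set of all faces of elements of $C$; $C$ is closed if $C=\mathrm{cl}\,C$; $C$ is locally closed if $\mathrm{mo}\,C=\mathrm{cl}\,C\setminus C$ is closed. For locally closed $C$, the relative homology $H_*(\mathrm{cl}\,C,\mathrm{mo}\,C)$ (of the chain complex with boundary $\partial x=\sum_y\kappa(x,y)y$) is defined. A multivector field $\mathcal{V}$ is a partition of $X$ into locally closed sets (multivectors); a multivector $V$ is regular if $H_*(\mathrm{cl}\,V,\mathrm{mo}\,V)=0$ and critical otherwise; $[x]_{\mathcal V}$ is the multivector containing $x$. The flow map is the multivalued map $\Pi_{\mathcal V}(x)=\mathrm{cl}\{x\}\cup[x]_{\mathcal V}$. A path is a finite sequence $x_0,\dots,x_n$ with $x_k\in\Pi_{\mathcal V}(x_{k-1})$; a solution is a map $\rho:\mathbb{Z}\to X$ with $\rho(k+1)\in\Pi_{\mathcal V}(\rho(k))$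 for all $k$. A solution $\rho$ is essential if whenever $\rho(k)$ lies in a regular multivector $V$, there exist integers $\ell_1<k<\ell_2$ with $\rho(\ell_1),\rho(\ell_2)\notin V$. A set $A\subset X$ is invariant if for every $x\in A$ there is an essential solution $\rho$ with $\rho(0)=x$ and $\rho(\mathbb{Z})\subset A$. A set is $\mathcal V$-compatible if it is a union of multivectors. A closed set $N$ isolates an invariant set $S\subset N$ if every path in $N$ with both endpoints in $S$ lies entirely in $S$, and $\Pi_{\mathcal V}(S)\subset N$; $S$ is an isolated invariant set if some closed $N$ isolates it. The $\mathcal V$-hull $\langle A\rangle_{\mathcal V}$ of $A\subset X$ is the intersection of all $\mathcal V$-compatible locally closed sets containing $A$. For a solution $\varphi$, $\alpha(\varphi)=\langle\bigcap_{t\in\mathbb{Z}^-}\varphi((-\infty,t])\rangle_{\mathcal V}$ and $\omega(\varphi)=\langle\bigcap_{t\in\mathbb{Z}^+}\varphi([t,\infty))\rangle_{\mathcal V}$. *)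

From Stdlib Require Import ClassicalEpsilon.
From mathcomp Require Import all_boot all_order all_algebra.
Set Implicit Arguments. Unset Strict Implicit. Unset Printing Implicit Defensive.
Import Order.TTheory GRing.Theory Num.Theory.
Local Open Scope ring_scope.

Definition pbool (P : Prop) : bool :=
  if excluded_middle_informative P then true else false.

Section Lefschetz.
Variables (F : fieldType) (X : finType) (dim : X -> nat) (kappa : X -> X -> F).

Definition lefschetz_graded : Prop :=
  forall x y, kappa x y != 0 -> dim x = (dim y).+1.
Definition lefschetz_dd0 : Prop :=
  forall x y, \sum_(z : X) kappa x z * kappa z y = 0.

Definition facet_rel : rel X := fun x y => kappa x y != 0.
Definition face (y x : X) : bool := connect facet_rel x y.

Definition cl (A : {set X}) : {set X} := [set y | [exists x in A, face y x]].
Definition is_closed (A : {set X}) : bool := cl A == A.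
Definition mo (A : {set X}) : {set X} := cl A :\: A.
Definition loc_closed (A : {set X}) : bool := is_closed (mo A).

(* Relative homology H_*(cl V, mo V): the relative chain group C_k(cl V, mo V)
   = C_k(cl V)/C_k(mo V) is identified with chains supported on V ∩ X_k, with
   the induced boundary (dx)(y) = kappa x y for y in V. *)
Definition rel_boundary (V : {set X}) (c : X -> F) (y : X) : F :=
  \sum_(x in V) c x * kappa x y.

Definition rel_homology_trivial (V : {set X}) : Prop :=
  forall (k : nat) (c : X -> F),
    (forall x, c x != 0 -> (x \in V) && (dim x == k)) ->
    (forall y, y \in V -> rel_boundary V c y = 0) ->
    exists d : X -> F,
      (forall x, d x != 0 -> (x \in V) && (dim x == k.+1)) /\
      (forall y, y \in V -> c y = rel_boundary V d y).

Definition multivector_field (MV : {set {set X}}) : Prop :=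
  partition MV [set: X] /\ (forall V, V \in MV -> loc_closed V).

Definition regular (V : {set X}) : Prop := rel_homology_trivial V.
Definition critical (V : {set X}) : Prop := ~ regular V.

Variable MV : {set {set X}}.

Definition mvec (x : X) : {set X} := pblock MV x.

Definition Pi (x : X) : {set X} := cl [set x] :|: mvec x.
Definition PiS (A : {set X}) : {set X} := \bigcup_(x in A) Pi x.

(* a path x0, x1, ..., xn is given as its head x0 and tail s *)
Definition is_path (x0 : X) (s : seq X) : bool :=
  path (fun a b => b \in Pi a) x0 s.

Definition solution (rho : int -> X) : Prop :=
  forall k : int, rho (k + 1) \in Pi (rho k).

Definition essential (rho : int -> X) : Prop :=
  solution rho /\
  forall k : int, regular (mvec (rho k)) ->
    exists l1 l2 : int, (l1 < k)%R /\ (k < l2)%R /\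
      rho l1 \notin mvec (rho k) /\ rho l2 \notin mvec (rho k).

Definition invariant (A : {set X}) : Prop :=
  forall x, x \in A -> exists rho : int -> X,
    essential rho /\ rho 0 = x /\ forall t, rho t \in A.

Definition compatible (A : {set X}) : bool :=
  [forall x in A, mvec x \subset A].

Definition isolates (N S : {set X}) : Prop :=
  is_closed N /\ S \subset N /\
  (forall x0 s, is_path x0 s -> all (fun y => y \in N) (x0 :: s) ->
     x0 \in S -> last x0 s \in S -> all (fun y => y \in S) (x0 :: s)) /\
  PiS S \subset N.

Definition isolated_invariant (S : {set X}) : Prop :=
  invariant S /\ exists N : {set X}, isolates N S.

Definition hull (A : {set X}) : {set X} :=
  \bigcap_(B : {set X} | [&& compatible B, loc_closed B & A \subset B]) B.

Definition alpha_set (phi : int -> X) : {set X} :=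
  [set x | pbool (forall t : int, (t <= 0)%R ->
                    exists s : int, (s <= t)%R /\ phi s = x)].
Definition omega_set (phi : int -> X) : {set X} :=
  [set x | pbool (forall t : int, (0 <= t)%R ->
                    exists s : int, (t <= s)%R /\ phi s = x)].

Definition alpha_lim (phi : int -> X) : {set X} := hull (alpha_set phi).
Definition omega_lim (phi : int -> X) : {set X} := hull (omega_set phi).

End Lefschetz.

(* Eventually an essential solution phi only visits its omega-limit points, and
   any two of them are joined by a segment of phi through such points.  In the
   hull S of these points every point is reachable from, and reaches, a limit
   point by Pi-steps inside S (those points form a compatible locally closed
   set containing them), so every point of S lies on a closed Pi-path in S
   through all limit points.  Running around that loop is an essential
   solution: were all limit points in one regular multivector, so would be the
   tail of phi.  A compatible locally closed set is isolated by its closure,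
   because no Pi-step leads from its mouth back into it.  The alpha-limit
   points are the omega-limit points of t |-> phi (-t), and the same argument
   runs backwards in time. *)

From Pilot Require Import Defs.
From mathcomp Require Import all_boot all_order all_algebra zify.
From Stdlib Require Import Classical ClassicalEpsilon.
Set Implicit Arguments. Unset Strict Implicit. Unset Printing Implicit Defensive.
Import Order.TTheory GRing.Theory Num.Theory.
Local Open Scope ring_scope.

Lemma modz_absz (k : int) (n : nat) : (0 < n)%N ->
  (k %% n)%Z = `|(k %% n)%Z|%:Z /\ (`|(k %% n)%Z| < n)%N.
Proof.
move=> n_gt0; have hge : 0 <= (k %% n)%Z by apply: modz_ge0; rewrite eqz_nat -lt0n.
have hlt : (k %% n)%Z < n by apply: ltz_pmod; rewrite ltz_nat.
by rewrite -ltz_nat !gez0_abs.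
Qed.

Section PeriodicExtension.
Variables (T : eqType) (y : T) (p : seq T).

(* Position [|p|] of [y :: p] is never read: for a loop ([last y p = y]) it
   repeats [y], so this is the walk around the loop, periodically in [k]. *)
Definition periodic_ext (k : int) : T := nth y (y :: p) `|(k %% (size p)%:Z)%Z|.

Lemma periodic_ext_mod (k m : int) :
  (k = m %[mod (size p)%:Z])%Z -> periodic_ext k = periodic_ext m.
Proof. by rewrite /periodic_ext => ->. Qed.

Lemma periodic_ext0 : periodic_ext 0 = y.
Proof. by rewrite /periodic_ext mod0z. Qed.

Hypotheses (p_gt0 : (0 < size p)%N) (p_loop : last y p = y).

Lemma periodic_ext_succ (k : int) :
  periodic_ext (k + 1) = nth y p `|(k %% (size p)%:Z)%Z|.
Proof.
have [hk hlt] := modz_absz k p_gt0; set i := `|_|%N in hk hlt *.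
rewrite /periodic_ext -modzDml hk -PoszD addn1 modz_nat absz_nat.
case: (ltnP i.+1 (size p)) => [hi|]; first by rewrite modn_small.
move=> hi; have {hi hlt} hi : size p = i.+1 by apply/eqP; rewrite eqn_leq hi hlt.
by rewrite hi modnn /= -{1}p_loop -nth_last hi.
Qed.

Lemma periodic_ext_path (e : rel T) (k : int) :
  path e y p -> e (periodic_ext k) (periodic_ext (k + 1)).
Proof.
move/(pathP y) => hpath; rewrite periodic_ext_succ; apply: hpath.
by case: (modz_absz k p_gt0).
Qed.

Lemma periodic_ext_onto a : a \in y :: p -> exists j : int, periodic_ext j = a.
Proof.
move=> ha; have := nth_index y ha; have : (index a (y :: p) < size (y :: p))%N.
  by rewrite index_mem.
move: (index a (y :: p)) => i; rewrite ltnS => hle hi.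
exists i%:Z; rewrite /periodic_ext modz_nat absz_nat.
case: (ltnP i (size p)) => [hlt|hge]; first by rewrite modn_small.
have hs : i = size p by apply/eqP; rewrite eqn_leq hle hge.
have hlast : nth y (y :: p) (size p) = y := etrans (nth_last y (y :: p)) p_loop.
by rewrite -hi hs modnn hlast.
Qed.

Lemma periodic_ext_revisits a (k : int) : a \in y :: p -> periodic_ext k != a ->
  exists l1 l2 : int, l1 < k < l2 /\ periodic_ext l1 = a /\ periodic_ext l2 = a.
Proof.
move=> ha hka; have [j hj] := periodic_ext_onto ha.
set n := (size p)%:Z; have n_gt0 : 0 < n by rewrite ltz_nat.
set r := ((j - k) %% n)%Z.
have r_ge0 : 0 <= r by apply: modz_ge0; rewrite gt_eqF.
have r_lt : r < n by apply: ltz_pmod.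
have hr : periodic_ext (k + r) = a.
  by rewrite -hj; apply: periodic_ext_mod; rewrite modzDmr addrC subrK.
have r_neq0 : r != 0 by apply: contraNneq hka => r0; rewrite -hr r0 addr0.
exists (k + r - n), (k + r); split; first lia.
split=> //; rewrite -hr; apply: periodic_ext_mod.
by rewrite -[in RHS](subrK n (k + r)) modzDr.
Qed.

End PeriodicExtension.

Local Close Scope ring_scope.

Lemma closed_walk_through (T : finType) (e : rel T) y (l : seq T) : e y y ->
  (forall a, a \in l -> connect e y a && connect e a y) ->
  exists p, [/\ path e y p, last y p = y, (0 < size p)%N & {subset l <= y :: p}].
Proof.
move=> eyy; elim: l => [|a l IH] hl; first by exists [:: y]; rewrite /= eyy.
have [|p [hp hlast p_gt0 hsub]] := IH; first by move=> b hb; apply: hl; rewrite inE hb orbT.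
have /andP[/connectP[p1 hp1 ha1] /connectP[p2 hp2 ha2]] := hl a (mem_head _ _).
exists (p1 ++ p2 ++ p); split.
- by rewrite cat_path hp1 -ha1 cat_path hp2 -ha2.
- by rewrite !last_cat -ha1 -ha2.
- by rewrite !size_cat; lia.
move=> b; rewrite inE => /orP[/eqP ->|hb].
  by rewrite ha1 -cat_cons mem_cat mem_last.
by move: (hsub b hb); rewrite !inE !mem_cat => /orP[->|->]; rewrite ?orbT.
Qed.

Section LimitSets.
Variables (X : finType) (phi : int -> X).
Local Open Scope ring_scope.

Lemma pbool_eq (P Q : Prop) : (P <-> Q) -> pbool P = pbool Q.
Proof.
by move=> hPQ; rewrite /pbool; do 2!case: excluded_middle_informative => /=; tauto.
Qed.

Lemma in_omega_set x :
  x \in omega_set phi <-> forall t, 0 <= t -> exists s, t <= s /\ phi s = x.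
Proof. by rewrite inE /pbool; case: excluded_middle_informative. Qed.

Lemma notin_omega_set x : x \notin omega_set phi ->
  exists2 t, 0 <= t & forall s, t <= s -> phi s != x.
Proof.
move=> /negP; rewrite in_omega_set => hx; apply: NNPP => hn; apply: hx => t ht.
apply: NNPP => hts; apply: hn; exists t => // s hs; apply/eqP => hsx.
by apply: hts; exists s.
Qed.

Lemma omega_set_eventually :
  exists2 T, 0 <= T & forall s, T <= s -> phi s \in omega_set phi.
Proof.
suff [T T_ge0 hT] : exists2 T, 0 <= T & forall s, T <= s -> phi s \notin enum (~: omega_set phi).
  by exists T => // s /hT; rewrite mem_enum inE negbK.
have : {subset enum (~: omega_set phi) <= [predC omega_set phi]}.
  by move=> x; rewrite mem_enum inE.
elim: (enum _) => [|x l IH] hl; first by exists 0.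
have [|T T_ge0 hT] := IH; first by move=> y hy; apply: hl; rewrite inE hy orbT.
have [t t_ge0 ht] := notin_omega_set (hl x (mem_head _ _)).
exists (T + t); first by rewrite addr_ge0.
move=> s hs; rewrite inE negb_or ht ?hT //=; lia.
Qed.

Lemma alpha_set_rev : alpha_set phi = omega_set (fun t => phi (- t)).
Proof.
apply/setP => x; rewrite !inE; apply: pbool_eq; split=> hx t ht.
  have [|s [hs <-]] := hx (- t); first by rewrite oppr_le0.
  by exists (- s); rewrite opprK lerNr.
have [|s [hs <-]] := hx (- t); first by rewrite oppr_ge0.
by exists (- s); rewrite lerNl.
Qed.

End LimitSets.

Section LefschetzComplex.
Variables (F : fieldType) (X : finType) (kappa : X -> X -> F).

Lemma face_refl x : face kappa x x.
Proof. exact: connect0. Qed.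

Lemma face_trans y x z : face kappa x y -> face kappa y z -> face kappa x z.
Proof. by move=> hxy hyz; apply: connect_trans hyz hxy. Qed.

Lemma clP (A : {set X}) y :
  reflect (exists2 x, x \in A & face kappa y x) (y \in cl kappa A).
Proof.
rewrite inE; apply: (iffP existsP) => [[x /andP[]]|[x hx hyx]]; first by exists x.
by exists x; rewrite hx.
Qed.

Lemma cl1 x y : (y \in cl kappa [set x]) = face kappa y x.
Proof. by apply/clP/idP => [[z /set1P ->]|]; last exists x; rewrite ?set11. Qed.

Lemma subset_cl (A : {set X}) : A \subset cl kappa A.
Proof. by apply/subsetP => x hx; apply/clP; exists x; last exact: face_refl. Qed.

Lemma cl_closed (A : {set X}) : is_closed kappa (cl kappa A).
Proof.
apply/eqP/setP => y; apply/idP/idP; last exact: (subsetP (subset_cl _)).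
case/clP=> z /clP[x hx hzx] hyz; apply/clP; exists x => //.
exact: face_trans hyz hzx.
Qed.

Lemma loc_closedP (A : {set X}) :
  reflect (forall u v w, u \in A -> w \in A -> face kappa u v -> face kappa v w -> v \in A)
          (loc_closed kappa A).
Proof.
apply: (iffP eqP) => [hmo u v w hu hw huv hvw|hconv].
  apply/negPn/negP => hv.
  have hvmo : v \in mo kappa A by rewrite inE hv; apply/clP; exists w.
  have : u \in cl kappa (mo kappa A) by apply/clP; exists v.
  by rewrite hmo inE hu.
apply/setP => y; apply/idP/idP; last exact: (subsetP (subset_cl _)).
case/clP=> z; rewrite inE => /andP[hzA /clP[w hw hzw]] hyz.
rewrite inE; apply/andP; split; last by apply/clP; exists w; first by []; apply: face_trans hyz hzw.
by apply: contra hzA => hy; apply: hconv hy hw hyz hzw.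
Qed.

Lemma PiP (MV : {set {set X}}) x y :
  (y \in Pi kappa MV x) = face kappa y x || (y \in mvec MV x).
Proof. by rewrite inE cl1. Qed.

Lemma compatibleP (MV : {set {set X}}) (A : {set X}) :
  reflect (forall x y, x \in A -> y \in mvec MV x -> y \in A) (compatible MV A).
Proof.
apply: (iffP forall_inP) => [hA x y hx|hA x hx]; first exact/subsetP/hA.
by apply/subsetP => y; apply: hA.
Qed.

Lemma subset_hull (MV : {set {set X}}) (A : {set X}) : A \subset hull kappa MV A.
Proof. by apply/bigcapsP => B /and3P[]. Qed.

Lemma hull_min (MV : {set {set X}}) (A B : {set X}) :
  compatible MV B -> loc_closed kappa B -> A \subset B -> hull kappa MV A \subset B.
Proof. by move=> hc hl hAB; apply: bigcap_inf; rewrite hc hl hAB. Qed.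

Lemma hull_compatible (MV : {set {set X}}) (A : {set X}) : compatible MV (hull kappa MV A).
Proof.
apply/compatibleP => x y hx hy; apply/bigcapP => B /and3P[hc hl hAB].
have hxB := subsetP (hull_min hc hl hAB) x hx.
exact: (elimT (compatibleP _ _) hc) _ _ hxB hy.
Qed.

Lemma hull_loc_closed (MV : {set {set X}}) (A : {set X}) :
  loc_closed kappa (hull kappa MV A).
Proof.
apply/loc_closedP => u v w hu hw huv hvw; apply/bigcapP => B /and3P[hc hl hAB].
have hsub := subsetP (hull_min hc hl hAB).
exact: (elimT (loc_closedP _) hl) _ _ _ (hsub _ hu) (hsub _ hw) huv hvw.
Qed.

Section MultivectorField.
Variable MV : {set {set X}}.
Hypothesis HMV : multivector_field kappa MV.

Lemma mvec_id x : x \in mvec MV x.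
Proof. by case: HMV => /and3P[/eqP hcov _ _] _; rewrite mem_pblock hcov inE. Qed.

Lemma mvec_eq x y : y \in mvec MV x -> mvec MV y = mvec MV x.
Proof. by case: HMV => /and3P[_ htriv _] _; apply: same_pblock. Qed.

Lemma mvec_sym x y : y \in mvec MV x -> x \in mvec MV y.
Proof. by move/mvec_eq ->; apply: mvec_id. Qed.

Lemma Pi_id x : x \in Pi kappa MV x.
Proof. by rewrite PiP face_refl. Qed.

Section Isolation.
Variable S : {set X}.
Hypotheses (HSc : compatible MV S) (HSl : loc_closed kappa S).

Lemma Pi_mo_notin x y : x \in mo kappa S -> y \in Pi kappa MV x -> y \notin S.
Proof.
case/setDP=> /clP[w hw hxw] hxS; rewrite PiP => hPi; apply: contraNN hxS => hyS.
case/orP: hPi => [hyx|hy]; first exact: (elimT (loc_closedP _) HSl) hyS hw hyx hxw.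
exact: (elimT (compatibleP _ _) HSc) hyS (mvec_sym hy).
Qed.

Lemma path_cl_last (x0 : X) (s : seq X) :
  is_path kappa MV x0 s -> all [in cl kappa S] (x0 :: s) -> last x0 s \in S ->
  all [in S] (x0 :: s).
Proof.
elim: s x0 => [|y s IH] x0 /=; first by move=> _ _; rewrite andbT.
case/andP=> hxy hp /andP[hx0 hall] hlast.
have hys : all [in S] (y :: s) by apply: IH.
apply/andP; split=> //; apply: contraTT (allP hys y (mem_head _ _)) => hx0S.
by apply: Pi_mo_notin hxy; rewrite inE hx0S.
Qed.

Lemma cl_isolates : isolates kappa MV (cl kappa S) S.
Proof.
split; first exact: cl_closed.
split; first exact: subset_cl.
split; first by move=> x0 s hp hcl _; apply: path_cl_last.
apply/subsetP => y /bigcupP[x hx]; rewrite PiP => /orP[hyx|hy]; first by apply/clP; exists x.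
exact: (subsetP (subset_cl _)) _ ((elimT (compatibleP _ _) HSc) _ _ hx hy).
Qed.

End Isolation.

Definition flow_within (S : {set X}) : rel X :=
  fun a b => (b \in Pi kappa MV a) && (b \in S).

(* The points of the hull reachable from A and reaching A, inside the hull,
   form a compatible locally closed superset of A, hence contain the hull. *)
Lemma hull_reachable (A : {set X}) y : y \in hull kappa MV A ->
  let e := flow_within (hull kappa MV A) in
  (exists2 a, a \in A & connect e a y) /\ (exists2 b, b \in A & connect e y b).
Proof.
set S := hull kappa MV A => hy e.
have hSc := elimT (compatibleP _ _) (hull_compatible MV A).
have hSl := elimT (loc_closedP _) (hull_loc_closed MV A).
pose R := [set z in S | [exists a in A, connect e a z] && [exists b in A, connect e z b]].
suff /subsetP/(_ y hy) : S \subset R.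
  by rewrite inE => /and3P[_ /exists_inP[a ha hay] /exists_inP[b hb hyb]]; split; [exists a|exists b].
apply: hull_min.
- apply/compatibleP => z w; rewrite inE => /and3P[hz /exists_inP[a ha haz] /exists_inP[b hb hzb]] hw.
  have hwS := hSc _ _ hz hw.
  have ezw : e z w by rewrite /e /flow_within PiP hw orbT hwS.
  have ewz : e w z by rewrite /e /flow_within PiP mvec_sym ?orbT.
  rewrite inE hwS /=; apply/andP; split; apply/exists_inP.
    by exists a; last exact: connect_trans haz (connect1 ezw).
  by exists b; last exact: connect_trans (connect1 ewz) hzb.
- apply/loc_closedP => u v w; rewrite !inE.
  move=> /and3P[hu _ /exists_inP[b hb hub]] /and3P[hw /exists_inP[a ha haw] _] huv hvw.
  have hv := hSl _ _ _ hu hw huv hvw.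
  have ewv : e w v by rewrite /e /flow_within PiP hvw hv.
  have evu : e v u by rewrite /e /flow_within PiP huv hu.
  rewrite hv /=; apply/andP; split; apply/exists_inP.
    by exists a; last exact: connect_trans haw (connect1 ewv).
  by exists b; last exact: connect_trans (connect1 evu) hub.
- apply/subsetP => a ha; rewrite inE (subsetP (subset_hull _ _) a ha) /=.
  by apply/andP; split; apply/exists_inP; exists a.
Qed.

Lemma solution_connect (B : {set X}) (phi : int -> X) (s0 s1 : int) :
  solution kappa MV phi -> (s0 <= s1)%R ->
  (forall i : int, (s0 <= i <= s1)%R -> phi i \in B) ->
  connect (flow_within B) (phi s0) (phi s1).
Proof.
move=> hsol hle; have [n ->] : exists n : nat, s1 = (s0 + n%:Z)%R.
  by exists `|s1 - s0|%N; lia.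
elim: n => [|n IH] hB; first by rewrite addr0.
have hBn : forall i : int, (s0 <= i <= s0 + n)%R -> phi i \in B.
  by move=> i /andP[h1 h2]; apply: hB; apply/andP; split => //; lia.
apply: connect_trans (IH hBn) (connect1 _).
have -> : (s0 + n.+1%:Z = s0 + n + 1)%R by lia.
by rewrite /flow_within hsol hB //; apply/andP; split; lia.
Qed.

Variable dim : X -> nat.

Section ChainRecurrentHull.
Variables (phi : int -> X) (A : {set X}).
Hypothesis phi_sol : solution kappa MV phi.
Hypothesis A_segments : forall a0 a, a0 \in A -> a \in A ->
  exists s0 s1 : int, [/\ (s0 <= s1)%R, phi s0 = a0, phi s1 = a &
                          forall i : int, (s0 <= i <= s1)%R -> phi i \in A].
Hypothesis A_not_regular : forall x, regular dim kappa (mvec MV x) ->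
  ~~ (A \subset mvec MV x).

Lemma hull_invariant : Defs.invariant dim kappa MV (hull kappa MV A).
Proof.
set S := hull kappa MV A; set e := flow_within S; move=> y hy.
have hAS := subsetP (subset_hull MV A).
have A_connect a0 a : a0 \in A -> a \in A -> connect e a0 a.
  move=> ha0 ha; have [s0 [s1 [hs <- <- hseg]]] := A_segments ha0 ha.
  by apply: solution_connect => // i /hseg/hAS.
have [[a1 ha1 hy1] [a2 ha2 hy2]] := hull_reachable hy.
have eyy : e y y by rewrite /e /flow_within Pi_id.
have [|p [hp hloop p_gt0 hsub]] := closed_walk_through (l := enum A) eyy.
  move=> a; rewrite mem_enum => ha; apply/andP; split.
    exact: connect_trans hy2 (A_connect _ _ ha2 ha).
  exact: connect_trans (A_connect _ _ ha ha1) hy1.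
set rho := periodic_ext y p.
have rho_step k : e (rho k) (rho (k + 1)%R) by apply: periodic_ext_path.
exists rho; split; [split|split].
- by move=> k; have /andP[] := rho_step k.
- move=> k /A_not_regular /subsetPn[a ha hna].
  have ha' : a \in y :: p by apply: hsub; rewrite mem_enum.
  have hka : rho k != a by apply: contraNneq hna => <-; apply: mvec_id.
  have [l1 [l2 [/andP[h1 h2] [e1 e2]]]] := periodic_ext_revisits p_gt0 hloop ha' hka.
  by exists l1, l2; rewrite /rho e1 e2.
- exact: periodic_ext0.
- by move=> t; have := rho_step (t - 1)%R; rewrite subrK => /andP[].
Qed.

Lemma hull_isolated_invariant : isolated_invariant dim kappa MV (hull kappa MV A).
Proof.
split; first exact: hull_invariant.
by exists (cl kappa (hull kappa MV A)); apply: cl_isolates;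
  [apply: hull_compatible|apply: hull_loc_closed].
Qed.

End ChainRecurrentHull.

Section LimitSetsOfEssentialSolutions.
Variable phi : int -> X.
Hypothesis phi_ess : essential dim kappa MV phi.
Local Open Scope ring_scope.

Lemma omega_lim_isolated_invariant :
  omega_lim kappa MV phi != set0 /\ isolated_invariant dim kappa MV (omega_lim kappa MV phi).
Proof.
have [phi_sol phi_leaves] := phi_ess.
have [T T_ge0 hT] := omega_set_eventually phi.
split; first by apply/set0Pn; exists (phi T); apply/(subsetP (subset_hull _ _))/hT.
apply: hull_isolated_invariant => //.
- move=> a0 a /in_omega_set ha0 /in_omega_set ha.
  have [s0 [hs0 <-]] := ha0 T T_ge0.
  have [s1 [hs1 <-]] := ha s0 (le_trans T_ge0 hs0).
  by exists s0, s1; split=> // i /andP[hi _]; apply/hT/(le_trans hs0).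
- move=> x hreg; apply/negP => hsub.
  have hTx := mvec_eq (subsetP hsub _ (hT T (lexx T))).
  have [|_ [l2 [_ [hl2 [_]]]]] := phi_leaves T; first by rewrite hTx.
  by rewrite hTx (subsetP hsub) // hT // ltW.
Qed.

Lemma alpha_lim_isolated_invariant :
  alpha_lim kappa MV phi != set0 /\ isolated_invariant dim kappa MV (alpha_lim kappa MV phi).
Proof.
have [phi_sol phi_leaves] := phi_ess; rewrite /alpha_lim alpha_set_rev.
set A := omega_set _; have [T T_ge0 hT] := omega_set_eventually (fun t => phi (- t)).
split; first by apply/set0Pn; exists (phi (- T)); apply/(subsetP (subset_hull _ _))/hT.
apply: hull_isolated_invariant => //.
- move=> a0 a /in_omega_set ha0 /in_omega_set ha.
  have [s1 [hs1 <-]] := ha T T_ge0.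
  have [s0 [hs0 <-]] := ha0 s1 (le_trans T_ge0 hs1).
  exists (- s0), (- s1); split; rewrite ?lerN2 //.
  move=> i /andP[_ hi]; rewrite -[i]opprK; apply: hT.
  by rewrite (le_trans hs1) // lerNr.
- move=> x hreg; apply/negP => hsub.
  have hTx := mvec_eq (subsetP hsub _ (hT T (lexx T))).
  have [|l1 [_ [hl1 [_ [+ _]]]]] := phi_leaves (- T); first by rewrite hTx.
  rewrite hTx (subsetP hsub) // -[l1]opprK hT //.
  by rewrite lerNr ltW // ltrNl.
Qed.

End LimitSetsOfEssentialSolutions.

End MultivectorField.
End LefschetzComplex.

Theorem mainTheorem2 (F : fieldType) (X : finType) (dim : X -> nat)
  (kappa : X -> X -> F)
  (Hgr : lefschetz_graded dim kappa) (Hdd : lefschetz_dd0 kappa)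
  (MV : {set {set X}}) (HMV : multivector_field kappa MV)
  (phi : int -> X) (Hphi : essential dim kappa MV phi) :
  alpha_lim kappa MV phi != set0 /\ isolated_invariant dim kappa MV (alpha_lim kappa MV phi) /\
  omega_lim kappa MV phi != set0 /\ isolated_invariant dim kappa MV (omega_lim kappa MV phi).
Proof.
have [alpha_ne alpha_iso] := alpha_lim_isolated_invariant HMV Hphi.
have [omega_ne omega_iso] := omega_lim_isolated_invariant HMV Hphi.
by [].
Qed.
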